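(* Consider any economy (in the setting described in the context, so in particular every market $\mathcal{M}(\theta)$, $\theta\in\Theta$, has a unique stable matching). Then there exists a Bayesian Nash equilibrium with truthfully reporting firms, in which every worker uses a weakly undominated strategy, whose outcome in each state $\theta$ is the unique stable matching (for the true preferences) of $\mathcal{M}(\theta)$.
   Context: Matching market: $\mathcal{M}=(F,W,U)$ with finite firms $F=\{f_i\}_{i\in[m]}$, finite workers $W=\{w_j\}_{j\in[n]}$, and utilities $u^f_{ij}$ (firm $f_i$ from worker $w_j$) and $u^w_{ij}$ (worker $w_j$ from firm $f_i$); being unmatched gives utility $0$; all preferences are strict and all firm–worker pairs are mutually acceptable (all match utilities are $>0$). A matching is stable if no agent is matched to an unacceptable partner and no firm–worker pair both strictly prefer each other to their assigned partners. An economy is $\mathcal{E}=(F,W,\{U(\theta)\}_{\theta\in\Theta},\Theta,\Psi)$ with finite state set $\Theta$, full-support prior $\Psi$, and market $\mathcal{M}(\theta)=(F,W,U(\theta))$ in state $\theta$; workers' utilities do not depend on the state ($u^w_{ij}(\theta)=u^w_{ij}(\theta')$ for all $\theta,\theta'$), while firms' utilities may. Standing assumption: each market $\mathcal{M}(\theta)$ has a unique stable matching. Game: a state $\theta$ is drawn according to $\Psi$; firms observe $\theta$ (and their utilities in $\theta$); each worker knows only his own (state-independent) preferences. All agents simultaneously submit rank-ordered lists of partners they declare acceptable, and the firm-proposing Deferred Acceptance algorithm is run on the reported lists. Firms are assumed to report truthfully; a worker's strategy is a single rank-ordered list, and a Bayesian Nash equilibrium (BNE) is a profile in which each worker's list maximizes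 his expected utility (under $\Psi$) given the others' strategies. A worker's strategy is weakly dominated if another list gives him weakly higher utility in every state against every profile of others' reports and strictly higher utility in some case. The outcome of a BNE is the matching it produces in each state. *)

From mathcomp Require Import all_boot all_order all_algebra.
Set Implicit Arguments. Unset Strict Implicit. Unset Printing Implicit Defensive.
Import Order.TTheory GRing.Theory Num.Theory.

(* Firms are 'I_m, workers are 'I_n.  A matching is recorded from the
   workers' side: mu w = Some f (w matched to f) or None (w unmatched). *)
Definition matching (m n : nat) := {ffun 'I_n -> option 'I_m}.

(* LF f : firm f's reported rank-ordered list of acceptable workers.
   LW w : worker w's reported rank-ordered list of acceptable firms
          (earlier = better).
   State: ptr f = number of workers (from the top of LF f) that have
   rejected f so far; f currently proposes to the (ptr f)-th entry. *)

Definition proposes (m n : nat) (LF : 'I_m -> seq 'I_n) (ptr : 'I_m -> nat)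
  (f : 'I_m) (w : 'I_n) : bool :=
  onth (LF f) (ptr f) == Some w.

Definition held (m n : nat) (LF : 'I_m -> seq 'I_n) (LW : 'I_n -> seq 'I_m)
  (ptr : 'I_m -> nat) (w : 'I_n) : option 'I_m :=
  [pick f | [&& proposes LF ptr f w, f \in LW w &
     [forall g, (proposes LF ptr g w && (g \in LW w)) ==>
                (index f (LW w) <= index g (LW w))%N]]].

Definition rejected (m n : nat) (LF : 'I_m -> seq 'I_n) (LW : 'I_n -> seq 'I_m)
  (ptr : 'I_m -> nat) (f : 'I_m) : bool :=
  if onth (LF f) (ptr f) is Some w then held LF LW ptr w != Some f else false.

Definition da_step (m n : nat) (LF : 'I_m -> seq 'I_n) (LW : 'I_n -> seq 'I_m)
  (ptr : 'I_m -> nat) : 'I_m -> nat :=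
  fun f => if rejected LF LW ptr f then (ptr f).+1 else ptr f.

(* Each non-final round increases \sum_f ptr f, which is bounded by
   \sum_f size (LF f); after that many rounds (+1) the algorithm has
   stopped (a round without rejections is a fixpoint of da_step). *)
Definition da_ptr (m n : nat) (LF : 'I_m -> seq 'I_n) (LW : 'I_n -> seq 'I_m)
  : 'I_m -> nat :=
  iter (\sum_(f < m) size (LF f)).+1 (da_step LF LW) (fun _ => 0%N).

Definition DA (m n : nat) (LF : 'I_m -> seq 'I_n) (LW : 'I_n -> seq 'I_m)
  : matching m n :=
  [ffun w => held LF LW (da_ptr LF LW) w].

Local Open Scope ring_scope.

(* uf f w : utility of firm f from worker w; uw f w : utility of worker w
   from firm f; being unmatched gives 0. *)
Definition worker_util (R : numDomainType) (m n : nat) (uw : 'I_m -> 'I_n -> R)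
  (mu : matching m n) (w : 'I_n) : R :=
  if mu w is Some f then uw f w else 0.

Definition firm_util (R : numDomainType) (m n : nat) (uf : 'I_m -> 'I_n -> R)
  (mu : matching m n) (f : 'I_m) : R :=
  if [pick w | mu w == Some f] is Some w then uf f w else 0.

Definition is_matching (m n : nat) (mu : matching m n) : Prop :=
  forall w1 w2 f, mu w1 = Some f -> mu w2 = Some f -> w1 = w2.

Definition stable (R : numDomainType) (m n : nat)
  (uf : 'I_m -> 'I_n -> R) (uw : 'I_m -> 'I_n -> R) (mu : matching m n) : Prop :=
  [/\ is_matching mu,
      (forall w f, mu w = Some f -> 0 < uw f w /\ 0 < uf f w) &
      ~ (exists f w, worker_util uw mu w < uw f w /\ firm_util uf mu f < uf f w)].

(* truthful rank-ordered list of a firm: all workers (all are acceptable),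
   in decreasing order of the firm's utility *)
Definition truthful_firm_lists (R : numDomainType) (m n : nat)
  (uf : 'I_m -> 'I_n -> R) : 'I_m -> seq 'I_n :=
  fun f => sort (fun w1 w2 => uf f w2 <= uf f w1) (enum 'I_n).

(* a worker strategy is a single (duplicate-free) list of firms *)
Definition upd (m n : nat) (s : 'I_n -> seq 'I_m) (w : 'I_n) (l : seq 'I_m)
  : 'I_n -> seq 'I_m :=
  fun w' => if w' == w then l else s w'.

Definition outcome_util (R : numDomainType) (m n : nat)
  (uf : 'I_m -> 'I_n -> R) (uw : 'I_m -> 'I_n -> R)
  (s : 'I_n -> seq 'I_m) (w : 'I_n) : R :=
  worker_util uw (DA (truthful_firm_lists uf) s) w.

Definition expected_util (R : numDomainType) (m n : nat) (Theta : finType)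
  (Psi : Theta -> R) (uf : Theta -> 'I_m -> 'I_n -> R) (uw : 'I_m -> 'I_n -> R)
  (s : 'I_n -> seq 'I_m) (w : 'I_n) : R :=
  \sum_(th : Theta) Psi th * outcome_util (uf th) uw s w.

Definition BNE (R : numDomainType) (m n : nat) (Theta : finType)
  (Psi : Theta -> R) (uf : Theta -> 'I_m -> 'I_n -> R) (uw : 'I_m -> 'I_n -> R)
  (s : 'I_n -> seq 'I_m) : Prop :=
  forall (w : 'I_n) (l : seq 'I_m), uniq l ->
    expected_util Psi uf uw (upd s w l) w <= expected_util Psi uf uw s w.

Definition weakly_dominated (R : numDomainType) (m n : nat) (Theta : finType)
  (uf : Theta -> 'I_m -> 'I_n -> R) (uw : 'I_m -> 'I_n -> R)
  (w : 'I_n) (l : seq 'I_m) : Prop :=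
  exists l' : seq 'I_m, [/\ uniq l',
    (forall (th : Theta) (t : 'I_n -> seq 'I_m), (forall w', uniq (t w')) ->
       outcome_util (uf th) uw (upd t w l) w <= outcome_util (uf th) uw (upd t w l') w) &
    (exists (th : Theta) (t : 'I_n -> seq 'I_m), (forall w', uniq (t w')) /\
       outcome_util (uf th) uw (upd t w l) w < outcome_util (uf th) uw (upd t w l') w)].

(* Truthful reports by all workers form the required equilibrium.  Firm-proposing
   deferred acceptance on the true lists is stable and firm-optimal, so in each
   state it produces the unique stable matching.

   Best response: suppose a deviation gives worker [w] a firm [f'] he prefers
   to his stable partner, and let [w] instead truncate his true list just below
   [f'].  Firm-optimality of DA and a rural-hospitals counting argument against
   the deviation outcome show that [w] is still matched, hence to a firm at
   least as good as [f'].  The truncation then creates no blocking pair, so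
   this is a second stable matching, contradicting uniqueness.

   Undominatedness: suppose a list [l'] does at least as well as the true list
   against every profile, and fix a profile [t].  Testing [l'] against the
   profiles in which every other worker accepts only his partner in one of the
   two DA outcomes at [t] shows that each of these outcomes is stable for the
   reports leading to the other; by firm-optimality of DA they coincide, so
   [l'] is never strictly better. *)

From mathcomp Require Import all_boot all_order all_algebra.
From Stdlib Require Import FunctionalExtensionality.
Import Order.TTheory GRing.Theory Num.Theory.
Set Implicit Arguments. Unset Strict Implicit. Unset Printing Implicit Defensive.

Section SeqIndex.
Variable T : eqType.
Implicit Types (s : seq T) (x y : T).

Lemma onth_size s i x : onth s i = Some x -> i < size s.
Proof. by move=> E; rewrite -onthTE E. Qed.

Lemma mem_onth s i x : onth s i = Some x -> x \in s.
Proof. by move=> E; apply/onthP; exists i. Qed.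

Lemma index_onth s i x : uniq s -> onth s i = Some x -> index x s = i.
Proof. by move=> s_uniq E; rewrite -(onth_nth x _ _ _ E) index_uniq // (onth_size E). Qed.

Lemma onth_index s x : x \in s -> onth s (index x s) = Some x.
Proof. by move=> sx; rewrite onthE (nth_map x) ?index_mem // nth_index. Qed.

Lemma ltn_index_neq s x y : x \in s -> x != y ->
  index x s <= index y s -> index x s < index y s.
Proof.
move=> sx neq_xy; rewrite leq_eqVlt => /orP[/eqP E|//].
by move: neq_xy; rewrite -(nth_index x sx) E nth_index ?eqxx // -index_mem -E index_mem.
Qed.

End SeqIndex.

Lemma upd_at (m n : nat) (t : 'I_n -> seq 'I_m) w l : upd t w l w = l.
Proof. by rewrite /upd eqxx. Qed.

Lemma upd_other (m n : nat) (t : 'I_n -> seq 'I_m) w l y : y != w -> upd t w l y = t y.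
Proof. by rewrite /upd => /negbTE ->. Qed.

Section ListStability.
Variables (m n : nat) (LF : 'I_m -> seq 'I_n).
Implicit Types (LW : 'I_n -> seq 'I_m) (nu : matching m n).

(* [g] prefers [x] to its partner (or to staying unmatched) iff
   [index x (LF g) < firm_rank nu g]. *)
Definition firm_rank nu g : nat :=
  if [pick z | nu z == Some g] is Some z then index z (LF g) else size (LF g).

Definition worker_prefers LW nu x g : bool :=
  if nu x is Some h then index g (LW x) < index h (LW x) else true.

Definition list_stable LW nu : Prop :=
  [/\ is_matching nu,
      forall x g, nu x = Some g -> g \in LW x /\ x \in LF g &
      forall g x, x \in LF g -> g \in LW x ->
        index x (LF g) < firm_rank nu g -> ~ worker_prefers LW nu x g].

Lemma firm_rank_partner nu g z : is_matching nu -> nu z = Some g ->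
  firm_rank nu g = index z (LF g).
Proof.
move=> nu_match Ez; rewrite /firm_rank; case: pickP => [z' /eqP Ez'|Nz].
  by rewrite (nu_match _ _ _ Ez' Ez).
by have := Nz z; rewrite Ez eqxx.
Qed.

Lemma firm_rank_gt nu h x : is_matching nu -> x \in LF h -> nu x != Some h ->
  index x (LF h) <= firm_rank nu h -> index x (LF h) < firm_rank nu h.
Proof.
move=> nu_match hx Nx; rewrite /firm_rank; case: pickP => [z /eqP Ez|_].
  by apply: ltn_index_neq => //; apply: contraNneq Nx => ->; rewrite Ez.
by rewrite index_mem.
Qed.

Lemma card_matched nu : is_matching nu ->
  #|[set x | nu x != None]| = #|[set g | [exists x, nu x == Some g]]|.
Proof.
move=> nu_match; rewrite -(card_imset _ (@Some_inj _ : injective (@Some 'I_m))).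
rewrite -(card_in_imset (f := fun x => nu x)); last first.
  move=> x1 x2; rewrite !inE; case E1: (nu x1) => [g1|] // _ _ E.
  by apply: (nu_match _ _ g1) => //; rewrite -E.
apply: eq_card => o; apply/imsetP/imsetP.
- case=> x; rewrite inE => Nx ->; case E: (nu x) Nx => [g|] // _.
  by exists g => //; rewrite inE; apply/existsP; exists x; rewrite E.
- case=> g; rewrite inE => /existsP [x /eqP Ex] ->.
  by exists x; rewrite ?inE Ex.
Qed.

Lemma list_stable_upd t w A B nu :
  list_stable (upd t w A) nu ->
  (forall g, nu w = Some g -> g \in B) ->
  (forall g, w \in LF g -> g \in B -> index w (LF g) < firm_rank nu g ->
     ~ worker_prefers (upd t w B) nu w g) ->
  list_stable (upd t w B) nu.
Proof.
move=> [nu_match nu_ir nu_nb] acceptable_w no_block_w; split => //.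
- move=> x g Ex; have [gx xg] := nu_ir _ _ Ex; split => //.
  have [Exw|neq_xw] := eqVneq x w.
    by subst x; rewrite upd_at; apply: acceptable_w.
  by move: gx; rewrite !upd_other.
- move=> g x xg; have [Exw|neq_xw] := eqVneq x w.
    by subst x; rewrite upd_at; apply: no_block_w.
  rewrite /worker_prefers !upd_other // => gx; move: (nu_nb g x xg).
  by rewrite /worker_prefers !upd_other //; apply.
Qed.

Lemma list_stable_upd_unmatched t w A B nu :
  list_stable (upd t w A) nu -> nu w = None -> {subset B <= A} ->
  list_stable (upd t w B) nu.
Proof.
move=> nu_stable nu_w sub_BA; have [_ _ nu_nb] := nu_stable.
apply: list_stable_upd nu_stable _ _ => [g|g wg gB]; first by rewrite nu_w.
move=> lt_rank _; apply: (nu_nb g w wg _ lt_rank); first by rewrite upd_at sub_BA.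
by rewrite /worker_prefers nu_w.
Qed.

End ListStability.

Section DeferredAcceptance.
Variables (m n : nat) (LF : 'I_m -> seq 'I_n) (LW : 'I_n -> seq 'I_m).
Hypothesis LF_uniq : forall f, uniq (LF f).
Implicit Types (ptr : 'I_m -> nat) (nu : matching m n).

Local Notation da_iter k := (iter k (da_step LF LW) (fun _ => 0%N)).

Lemma heldP ptr w f : held LF LW ptr w = Some f ->
  [/\ proposes LF ptr f w, f \in LW w &
     forall g, proposes LF ptr g w -> g \in LW w -> index f (LW w) <= index g (LW w)].
Proof.
rewrite /held; case: pickP => // h /and3P[Ph hw /forallP min_h] [<-].
by split=> // g Pg gw; move: (min_h g); rewrite Pg gw.
Qed.

Lemma held_some ptr w g : proposes LF ptr g w -> g \in LW w ->
  exists2 h, held LF LW ptr w = Some h & index h (LW w) <= index g (LW w).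
Proof.
move=> Pg gw; case E: (held LF LW ptr w) => [h|].
  by exists h => //; case/heldP: E => _ _; apply.
move: E; rewrite /held; case: pickP => // none _.
pose acceptable_proposer f := proposes LF ptr f w && (f \in LW w).
have Pgw : acceptable_proposer g by rewrite /acceptable_proposer Pg gw.
case: (arg_minnP (fun f => index f (LW w)) Pgw) => k /andP[Pk kw] min_k.
move: (none k); rewrite Pk kw /=; move/negP; elim; apply/forallP => j.
by apply/implyP; apply: min_k.
Qed.

Lemma held_da_step ptr w g : held LF LW ptr w = Some g ->
  exists2 h, held LF LW (da_step LF LW ptr) w = Some h & index h (LW w) <= index g (LW w).
Proof.
move=> Eg; case/heldP: (Eg) => Pg gw _.
have keep_g : da_step LF LW ptr g = ptr g.
  by rewrite /da_step /rejected; move: Pg => /eqP ->; rewrite Eg eqxx.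
by apply: held_some => //; rewrite /proposes keep_g.
Qed.

Lemma rejected_ptr_lt ptr f : rejected LF LW ptr f -> ptr f < size (LF f).
Proof. by rewrite /rejected; case E: onth => [x|] // _; apply: onth_size E. Qed.

Lemma sum_da_step ptr : \sum_(f < m) da_step LF LW ptr f =
  \sum_(f < m) ptr f + \sum_(f < m) (rejected LF LW ptr f : nat).
Proof.
rewrite -big_split /=; apply: eq_bigr => f _; rewrite /da_step.
by case: rejected; rewrite ?addn1 ?addn0.
Qed.

Lemma da_iter_le_size k f : da_iter k f <= size (LF f).
Proof.
elim: k f => [|k IH] f //=; rewrite {1}/da_step.
by case R: rejected => //; apply: rejected_ptr_lt R.
Qed.

(* Every round with a rejection increases the bounded potential [\sum_f ptr f]. *)
Lemma da_iter_final_or_ge k :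
  (forall f, ~~ rejected LF LW (da_iter k) f) \/ k <= \sum_(f < m) da_iter k f.
Proof.
elim: k => [|k [final|IH]]; first by right.
- left; have -> : da_iter k.+1 = da_iter k.
    by apply: functional_extensionality => g /=; rewrite /da_step (negbTE (final g)).
  exact: final.
- case: (boolP [exists f, rejected LF LW (da_iter k) f]) => [/existsP[f Rf]|none].
    by right; rewrite /= sum_da_step -addn1 leq_add // (bigD1 f) //= Rf.
  left; have -> : da_iter k.+1 = da_iter k.
    apply: functional_extensionality => g /=; rewrite /da_step.
    by move/existsPn: none => /(_ g) /negbTE ->.
  by move/existsPn: none.
Qed.

Lemma da_ptr_le_size f : da_ptr LF LW f <= size (LF f).
Proof. exact: da_iter_le_size. Qed.

Lemma da_ptr_unrejected f : ~~ rejected LF LW (da_ptr LF LW) f.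
Proof.
case: (da_iter_final_or_ge (\sum_(f < m) size (LF f)).+1) => [|too_long]; first exact.
exfalso; move: too_long; rewrite ltnNge => /negP; apply.
by apply: leq_sum => g _; apply: da_ptr_le_size.
Qed.

Definition rejections_justified ptr := forall f x,
  index x (LF f) < ptr f -> f \in LW x ->
  exists2 g, held LF LW ptr x = Some g & index g (LW x) < index f (LW x).

Lemma rejections_justified_da_step ptr :
  rejections_justified ptr -> rejections_justified (da_step LF LW ptr).
Proof.
have still_better f x g : held LF LW ptr x = Some g ->
    index g (LW x) < index f (LW x) ->
    exists2 h, held LF LW (da_step LF LW ptr) x = Some h & index h (LW x) < index f (LW x).
  move=> Eg lt_gf; have [h Eh le_hg] := held_da_step Eg.
  by exists h => //; apply: leq_ltn_trans lt_gf.
move=> just f x; rewrite /da_step; case R: (rejected LF LW ptr f) => x_passed fx; last first.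
  by have [g Eg lt_gf] := just f x x_passed fx; apply: still_better Eg lt_gf.
rewrite ltnS leq_eqVlt in x_passed; case/orP: x_passed => [/eqP Ex|x_passed]; last first.
  by have [g Eg lt_gf] := just f x x_passed fx; apply: still_better Eg lt_gf.
have xf : x \in LF f by rewrite -index_mem Ex; apply: rejected_ptr_lt R.
have Eo : onth (LF f) (ptr f) = Some x by rewrite -Ex onth_index.
move: R; rewrite /rejected Eo => f_rejected.
have [h Eh le_hf] := held_some (introT eqP Eo) fx.
have neq_hf : h != f by apply: contraNneq f_rejected => <-; rewrite Eh.
have hx : h \in LW x by case/heldP: Eh.
exact: still_better Eh (ltn_index_neq hx neq_hf le_hf).
Qed.

Lemma rejections_justified_da_ptr : rejections_justified (da_ptr LF LW).
Proof.
rewrite /da_ptr; elim: _.+1 => [f x //|k IH]; exact: rejections_justified_da_step.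
Qed.

Lemma DA_held x : DA LF LW x = held LF LW (da_ptr LF LW) x.
Proof. by rewrite /DA ffunE. Qed.

Lemma DA_partner x f : DA LF LW x = Some f ->
  onth (LF f) (da_ptr LF LW f) = Some x /\ f \in LW x.
Proof. by rewrite DA_held => /heldP [/eqP ? ? _]. Qed.

Lemma DA_of_proposal x f : onth (LF f) (da_ptr LF LW f) = Some x -> DA LF LW x = Some f.
Proof.
by move=> E; have := da_ptr_unrejected f; rewrite /rejected E negbK DA_held => /eqP.
Qed.

Lemma firm_rank_DA f : firm_rank LF (DA LF LW) f = da_ptr LF LW f.
Proof.
rewrite /firm_rank; case: pickP => [z /eqP /DA_partner[Ez _] | unmatched].
  exact: index_onth Ez.
apply/eqP; rewrite eqn_leq da_ptr_le_size andbT leqNgt; apply/negP => lt_size.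
case E: (onth (LF f) (da_ptr LF LW f)) => [y|]; last by move: lt_size; rewrite -onthTE E.
by have := unmatched y; rewrite (DA_of_proposal E) eqxx.
Qed.

Lemma DA_list_stable : list_stable LF LW (DA LF LW).
Proof.
split.
- by move=> x1 x2 g /DA_partner[E1 _] /DA_partner[E2 _]; move: E1; rewrite E2 => -[].
- by move=> x g /DA_partner[E1 E2]; split => //; apply: mem_onth E1.
- move=> g x _ gx; rewrite firm_rank_DA => x_passed.
  have [h Eh lt_hg] := rejections_justified_da_ptr x_passed gx.
  by rewrite /worker_prefers DA_held Eh ltnNge (ltnW lt_hg).
Qed.

Section FirmOptimality.
Variables (LW' : 'I_n -> seq 'I_m) (nu : matching m n).
Hypotheses (nu_stable : list_stable LF LW' nu)
  (nu_acceptable : forall x g, LW x != LW' x -> nu x = Some g -> g \in LW x).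

(* As long as no worker whose list differs holds a proposal, no firm is
   rejected by its [nu]-partner: that worker would hold a firm he prefers,
   which would then block [nu]. *)
Lemma da_step_le_firm_rank ptr :
  (forall g, ptr g <= firm_rank LF nu g) ->
  (forall x, LW x != LW' x -> held LF LW ptr x = None) ->
  forall g, da_step LF LW ptr g <= firm_rank LF nu g.
Proof.
have [nu_match nu_ir nu_nb] := nu_stable.
move=> below unheld g; rewrite /da_step; case R: (rejected LF LW ptr g); last exact: below.
rewrite ltn_neqAle below andbT; apply/eqP => ptr_rank.
have lt_size := rejected_ptr_lt R.
move: R; rewrite /rejected; case Eo: onth => [x|] // g_rejected.
have nux : nu x = Some g.
  move: ptr_rank; rewrite /firm_rank; case: pickP => [z /eqP Ez|_] ptr_rank; last first.
    by move: lt_size; rewrite ptr_rank ltnn.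
  have zg : z \in LF g by case: (nu_ir _ _ Ez).
  have -> // : x = z.
  by apply: (index_inj x (mem_onth Eo) zg); rewrite (index_onth (LF_uniq g) Eo).
have gx : g \in LW x.
  have [same|diff] := eqVneq (LW x) (LW' x); last exact: nu_acceptable diff nux.
  by rewrite same; case: (nu_ir _ _ nux).
have [h Eh le_hg] := held_some (introT eqP Eo) gx.
have neq_hg : h != g by apply: contraNneq g_rejected => <-; rewrite Eh.
case/heldP: (Eh) => /eqP Eh' hx _.
have [same|diff] := eqVneq (LW x) (LW' x); last by move: (unheld x diff); rewrite Eh.
apply: (nu_nb h x (mem_onth Eh')); first by rewrite -same.
  apply: firm_rank_gt => //; first exact: mem_onth Eh'.
    by rewrite nux; apply: contra_neq neq_hg => -[].
  by rewrite (index_onth (LF_uniq h) Eh').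
by rewrite /worker_prefers nux -same ltn_index_neq.
Qed.

Lemma DA_deviator_matched_or_firm_optimal :
  (exists2 x, LW x != LW' x & DA LF LW x != None) \/
  (forall g, da_ptr LF LW g <= firm_rank LF nu g).
Proof.
suff: forall k, (exists2 x, LW x != LW' x & held LF LW (da_iter k) x != None) \/
    (forall g, da_iter k g <= firm_rank LF nu g).
  move/(_ (\sum_(f < m) size (LF f)).+1) => [[x diff held_x]|]; last by right.
  by left; exists x; rewrite // DA_held.
elim=> [|k [[x diff]|below]]; first by right.
  case E: held => [g|] // _; have [h Eh _] := held_da_step E.
  by left; exists x; rewrite //= Eh.
case: (boolP [exists x, (LW x != LW' x) && (held LF LW (da_iter k) x != None)]).
  case/existsP=> x /andP[diff]; case E: held => [g|] // _.
  by have [h Eh _] := held_da_step E; left; exists x; rewrite //= Eh.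
move/existsPn=> unheld; right; apply: da_step_le_firm_rank => // x diff.
by move: (unheld x); rewrite diff /= negbK => /eqP.
Qed.

End FirmOptimality.

Lemma DA_firm_optimal nu : list_stable LF LW nu ->
  forall g, da_ptr LF LW g <= firm_rank LF nu g.
Proof.
move=> nu_stable.
have no_deviator x g : LW x != LW x -> nu x = Some g -> g \in LW x by rewrite eqxx.
by case: (DA_deviator_matched_or_firm_optimal nu_stable no_deviator) => // -[x]; rewrite eqxx.
Qed.

End DeferredAcceptance.

Section ComparingDA.
Variables (m n : nat) (LF : 'I_m -> seq 'I_n).
Hypothesis LF_uniq : forall f, uniq (LF f).
Implicit Types (LW : 'I_n -> seq 'I_m) (nu : matching m n).

Lemma DA_eq_of_da_ptr LW1 LW2 : da_ptr LF LW1 =1 da_ptr LF LW2 -> DA LF LW1 = DA LF LW2.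
Proof.
have DA_sub LW LW' : da_ptr LF LW =1 da_ptr LF LW' ->
    forall x g, DA LF LW x = Some g -> DA LF LW' x = Some g.
  by move=> E x g /DA_partner[Eo _]; apply: DA_of_proposal; rewrite -E.
move=> E; apply/ffunP => x; case E1: (DA LF LW1 x) => [g|].
  by rewrite (DA_sub _ _ E _ _ E1).
case E2: (DA LF LW2 x) => [g|] //.
by rewrite (DA_sub LW2 LW1 (fun f => esym (E f)) _ _ E2) in E1.
Qed.

Lemma DA_eq_of_cross_stable LW1 LW2 :
  list_stable LF LW2 (DA LF LW1) -> list_stable LF LW1 (DA LF LW2) ->
  DA LF LW1 = DA LF LW2.
Proof.
move=> stable12 stable21; apply: DA_eq_of_da_ptr => g; apply/eqP; rewrite eqn_leq.
have := DA_firm_optimal LF_uniq stable12 g; have := DA_firm_optimal LF_uniq stable21 g.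
by rewrite !firm_rank_DA // => -> ->.
Qed.

(* A rural hospitals argument: the firms matched in [nu] are matched by DA,
   the workers matched by DA are matched in [nu] (or they would block it), and
   both sides of a matching have equally many matched agents. *)
Lemma DA_matched_of_firm_optimal LW LW' nu :
  list_stable LF LW' nu -> (forall g, da_ptr LF LW g <= firm_rank LF nu g) ->
  (forall x g, DA LF LW x = Some g -> g \in LW' x) ->
  forall x, nu x != None -> DA LF LW x != None.
Proof.
move=> [nu_match nu_ir nu_nb] below acceptable.
set mu := DA LF LW.
have [mu_match _ _] := DA_list_stable LW LF_uniq.
have firms_sub : [set g | [exists x, nu x == Some g]] \subset
                 [set g | [exists x, mu x == Some g]].
  apply/subsetP => g; rewrite !inE => /existsP [z /eqP Ez].
  have lt_size : da_ptr LF LW g < size (LF g).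
    apply: leq_ltn_trans (below g) _.
    by rewrite (firm_rank_partner _ nu_match Ez) index_mem; case: (nu_ir _ _ Ez).
  case E: (onth (LF g) (da_ptr LF LW g)) => [y|]; last by move: lt_size; rewrite -onthTE E.
  by apply/existsP; exists y; rewrite /mu (DA_of_proposal E).
have workers_sub : [set x | mu x != None] \subset [set x | nu x != None].
  apply/subsetP => x; rewrite !inE; case Emu: (mu x) => [h|] // _.
  apply/negP => /eqP Enu; have [Eo _] := DA_partner Emu.
  apply: (nu_nb h x (mem_onth Eo) (acceptable _ _ Emu)); last by rewrite /worker_prefers Enu.
  apply: firm_rank_gt => //; [exact: mem_onth Eo | by rewrite Enu |].
  by rewrite (index_onth (LF_uniq h) Eo) below.
have card_eq : #|[set x | mu x != None]| = #|[set x | nu x != None]|.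
  apply/eqP; rewrite eqn_leq subset_leq_card //.
  by rewrite (card_matched mu_match) (card_matched nu_match) subset_leq_card.
move=> x; have := elimT (subset_cardP card_eq) workers_sub x.
by rewrite !inE => ->.
Qed.

End ComparingDA.

Section CapturedProfiles.
Variables (m n : nat) (LF : 'I_m -> seq 'I_n).
Hypothesis LF_uniq : forall f, uniq (LF f).
Implicit Types (LW : 'I_n -> seq 'I_m) (nu : matching m n).

Definition captured nu : 'I_n -> seq 'I_m :=
  fun y => if nu y is Some h then [:: h] else [::].

Lemma mem_captured nu y h : (h \in captured nu y) = (nu y == Some h).
Proof. by rewrite /captured; case: (nu y) => [k|] //; rewrite mem_seq1 eq_sym. Qed.

Lemma captured_uniq nu y : uniq (captured nu y).
Proof. by rewrite /captured; case: (nu y). Qed.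

Lemma list_stable_captured LW w L :
  list_stable LF (upd (captured (DA LF (upd LW w L))) w L) (DA LF (upd LW w L)).
Proof.
have [nu_match nu_ir nu_nb] := DA_list_stable (upd LW w L) LF_uniq.
split => //.
- move=> x g Ex; have [gx xg] := nu_ir _ _ Ex; split => //.
  have [Exw|neq_xw] := eqVneq x w; first by move: gx; rewrite Exw !upd_at.
  by rewrite upd_other // mem_captured Ex.
- move=> g x xg; have [Exw|neq_xw] := eqVneq x w.
    subst x; rewrite upd_at => gL lt_rank prefers.
    apply: (nu_nb g w xg _ lt_rank); first by rewrite upd_at.
    by move: prefers; rewrite /worker_prefers !upd_at.
  by rewrite upd_other // mem_captured => /eqP Ex _; rewrite /worker_prefers Ex ltnn.
Qed.

Lemma DA_captured_partner LW w L a : DA LF (upd LW w L) w = Some a ->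
  DA LF (upd (captured (DA LF (upd LW w L))) w L) w = Some a.
Proof.
set nu := DA LF (upd LW w L); set LW1 := upd (captured nu) w L => Ea.
have nu_stable : list_stable LF LW1 nu by apply: list_stable_captured.
have [nu_match nu_ir _] := nu_stable.
have below := DA_firm_optimal LF_uniq nu_stable a.
rewrite (firm_rank_partner _ nu_match Ea) in below.
have lt_size : da_ptr LF LW1 a < size (LF a).
  by apply: leq_ltn_trans below _; rewrite index_mem; case: (nu_ir _ _ Ea).
case E: (onth (LF a) (da_ptr LF LW1 a)) => [y|]; last by move: lt_size; rewrite -onthTE E.
have Ey := DA_of_proposal E; have [<-//|neq_yw] := eqVneq y w.
have [_ mu_ir _] := DA_list_stable LW1 LF_uniq.
move: (mu_ir _ _ Ey).1; rewrite /LW1 upd_other // mem_captured => /eqP Ey'.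
by move: neq_yw; rewrite (nu_match _ _ _ Ey' Ea) eqxx.
Qed.

Lemma DA_captured_firm_prefers nu w L k z :
  DA LF (upd (captured nu) w L) w = Some k -> nu z = Some k -> z \in LF k -> z != w ->
  index w (LF k) < index z (LF k).
Proof.
set D := DA LF (upd (captured nu) w L) => Ek Ez zk neq_zw.
have [D_match D_ir D_nb] := DA_list_stable (upd (captured nu) w L) LF_uniq.
have Dz : D z = None.
  case E: (D z) => [k'|] //; move: (D_ir _ _ E).1.
  rewrite upd_other // mem_captured Ez => /eqP[Ek']; subst k'.
  by move: neq_zw; rewrite (D_match _ _ _ E Ek) eqxx.
apply: ltn_index_neq; [exact: (D_ir _ _ Ek).2 | by rewrite eq_sym |].
rewrite leqNgt; apply/negP => lt_zw.
apply: (D_nb k z zk); first by rewrite upd_other // mem_captured Ez.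
  by rewrite (firm_rank_partner _ D_match Ek).
by rewrite /worker_prefers Dz.
Qed.

Lemma firm_rank_DA_captured nu w L g :
  is_matching nu -> DA LF (upd (captured nu) w L) w != Some g ->
  index w (LF g) < firm_rank LF nu g ->
  index w (LF g) < firm_rank LF (DA LF (upd (captured nu) w L)) g.
Proof.
move=> nu_match Nw lt_rank.
rewrite [firm_rank _ (DA _ _) g]/firm_rank; case: pickP => [z /eqP Ez|_].
  have neq_zw : z != w by apply: contraNneq Nw => Ezw; move: Ez; rewrite Ezw => ->.
  have [_ D_ir _] := DA_list_stable (upd (captured nu) w L) LF_uniq.
  move: (D_ir _ _ Ez).1; rewrite upd_other // mem_captured => /eqP Ez'.
  by rewrite -(firm_rank_partner _ nu_match Ez').
by apply: leq_trans lt_rank _; rewrite /firm_rank; case: pickP => // z _; apply: index_size.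
Qed.

End CapturedProfiles.

Local Open Scope ring_scope.

Lemma index_sorted_utility (R : realDomainType) (T : eqType) (u : T -> R) s a b :
  sorted (fun x y => u y <= u x) s -> injective u -> a \in s -> b \in s ->
  (index a s < index b s)%N = (u b < u a).
Proof.
move=> s_sorted u_inj sa sb.
have tr : transitive (fun x y => u y <= u x).
  by move=> y x z le_yx le_zy; apply: le_trans le_zy le_yx.
case: ltngtP => [lt_ab|lt_ba|eq_ab].
- have := sorted_ltn_index tr s_sorted a b sa sb lt_ab.
  rewrite le_eqVlt => /orP[/eqP/u_inj Eba|//].
  by move: lt_ab; rewrite Eba ltnn.
- by have /= le_ab := sorted_ltn_index tr s_sorted b a sb sa lt_ba; rewrite ltNge le_ab.
- by rewrite (index_inj a sa sb eq_ab) ltxx.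
Qed.

Section SortByUtility.
Variables (R : realDomainType) (T : finType) (u : T -> R).

Definition sort_by_utility : seq T := sort (fun x y => u y <= u x) (enum T).

Lemma sort_by_utility_uniq : uniq sort_by_utility.
Proof. by rewrite sort_uniq enum_uniq. Qed.

Lemma mem_sort_by_utility x : x \in sort_by_utility.
Proof. by rewrite mem_sort mem_enum. Qed.

Lemma sort_by_utility_sorted : sorted (fun x y => u y <= u x) sort_by_utility.
Proof. by apply: sort_sorted => x y; apply: le_total. Qed.

Lemma index_sort_by_utility a b : injective u ->
  (index a sort_by_utility < index b sort_by_utility)%N = (u b < u a).
Proof.
move=> u_inj; apply: index_sorted_utility => //;
  [exact: sort_by_utility_sorted | exact: mem_sort_by_utility | exact: mem_sort_by_utility].
Qed.

End SortByUtility.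

Section TruthfulReports.
Variables (R : realDomainType) (m n : nat) (uf uw : 'I_m -> 'I_n -> R).
Hypotheses (uf_gt0 : forall f w, 0 < uf f w) (uw_gt0 : forall f w, 0 < uw f w)
  (uf_inj : forall f, injective (uf f)) (uw_inj : forall w, injective (fun f => uw f w)).
Implicit Types (LW : 'I_n -> seq 'I_m) (nu : matching m n).

Local Notation LF := (truthful_firm_lists uf).

Definition truthful_worker_lists : 'I_n -> seq 'I_m :=
  fun w => sort_by_utility (fun f => uw f w).

Local Notation TW := truthful_worker_lists.

Lemma truthful_firm_uniq f : uniq (LF f).
Proof. exact: sort_by_utility_uniq. Qed.

Lemma mem_truthful_firm f w : w \in LF f.
Proof. exact: mem_sort_by_utility. Qed.

Lemma index_truthful_firm f a b : (index a (LF f) < index b (LF f))%N = (uf f b < uf f a).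
Proof. exact: index_sort_by_utility. Qed.

Lemma truthful_worker_uniq w : uniq (TW w).
Proof. exact: sort_by_utility_uniq. Qed.

Lemma mem_truthful_worker w f : f \in TW w.
Proof. exact: mem_sort_by_utility. Qed.

Lemma index_truthful_worker w a b : (index a (TW w) < index b (TW w))%N = (uw b w < uw a w).
Proof. exact: index_sort_by_utility. Qed.

Lemma worker_util_ge0 nu x : 0 <= worker_util uw nu x.
Proof. by rewrite /worker_util; case: (nu x) => // f; apply: ltW. Qed.

Lemma index_lt_firm_rank nu h x :
  firm_util uf nu h < uf h x -> (index x (LF h) < firm_rank LF nu h)%N.
Proof.
rewrite /firm_util /firm_rank; case: pickP => [z _|_] lt_util.
  by rewrite index_truthful_firm.
by rewrite index_mem mem_truthful_firm.
Qed.

Lemma stable_of_list_stable LW nu : list_stable LF LW nu ->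
  (forall x h, worker_util uw nu x < uw h x -> h \in LW x /\ worker_prefers LW nu x h) ->
  stable uf uw nu.
Proof.
move=> [nu_match _ nu_nb] prefers; split => //.
case=> f [w [lt_w lt_f]]; have [fw prefers_f] := prefers _ _ lt_w.
exact: nu_nb (mem_truthful_firm f w) fw (index_lt_firm_rank lt_f) prefers_f.
Qed.

Lemma truthful_worker_prefers LW nu x h : LW x = TW x ->
  worker_util uw nu x < uw h x -> h \in LW x /\ worker_prefers LW nu x h.
Proof.
move=> E; rewrite /worker_util /worker_prefers E mem_truthful_worker.
by case: (nu x) => [g|] // lt_gh; rewrite index_truthful_worker.
Qed.

Lemma DA_truthful_stable : stable uf uw (DA LF TW).
Proof.
apply: (stable_of_list_stable (DA_list_stable TW truthful_firm_uniq)) => x h.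
exact: truthful_worker_prefers.
Qed.

Section Truncation.
Variables (w : 'I_n) (l : seq 'I_m) (f' : 'I_m).
Hypothesis deviation_w : DA LF (upd TW w l) w = Some f'.

Local Notation truncated := (upd TW w [seq g <- TW w | uw f' w <= uw g w]).

Lemma DA_truncated_partner :
  exists2 g, DA LF truncated w = Some g & uw f' w <= uw g w.
Proof.
have dev_stable := DA_list_stable (upd TW w l) truthful_firm_uniq.
have [_ trunc_ir _] := DA_list_stable truncated truthful_firm_uniq.
case Ew: (DA LF truncated w) => [g|].
  by exists g => //; move: (trunc_ir _ _ Ew).1; rewrite upd_at mem_filter => /andP[].
have acceptable x g : truncated x != upd TW w l x ->
    DA LF (upd TW w l) x = Some g -> g \in truncated x.
  have [->|neq_xw] := eqVneq x w; last by rewrite !upd_other // eqxx.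
  by rewrite deviation_w => _ [<-]; rewrite upd_at mem_filter lexx mem_truthful_worker.
have [[x diff]|below] :=
  DA_deviator_matched_or_firm_optimal truthful_firm_uniq dev_stable acceptable.
  have [Exw|neq_xw] := eqVneq x w; first by rewrite Exw Ew.
  by move: diff; rewrite !upd_other // eqxx.
have trunc_acceptable x g : DA LF truncated x = Some g -> g \in upd TW w l x.
  have [->|neq_xw] := eqVneq x w; first by rewrite Ew.
  by rewrite upd_other // mem_truthful_worker.
have := DA_matched_of_firm_optimal truthful_firm_uniq dev_stable below trunc_acceptable (x := w).
by rewrite deviation_w Ew eqxx => /(_ isT).
Qed.

Lemma DA_truncated_stable : stable uf uw (DA LF truncated).
Proof.
have [g Eg le_f'g] := DA_truncated_partner.
apply: (stable_of_list_stable (DA_list_stable truncated truthful_firm_uniq)) => x h.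
have [Exw|neq_xw] := eqVneq x w; last by apply: truthful_worker_prefers; rewrite upd_other.
subst x; rewrite /worker_util Eg => lt_gh.
have in_trunc f : (f \in [seq g <- TW w | uw f' w <= uw g w]) = (uw f' w <= uw f w).
  by rewrite mem_filter mem_truthful_worker andbT.
rewrite /worker_prefers Eg upd_at in_trunc (le_trans le_f'g (ltW lt_gh)); split => //.
rewrite (index_sorted_utility (u := fun f => uw f w)) ?in_trunc ?(le_trans le_f'g (ltW lt_gh)) //.
apply: sorted_filter; last exact: sort_by_utility_sorted.
by move=> y x z le_yx le_zy; apply: le_trans le_zy le_yx.
Qed.

End Truncation.

Lemma truthful_best_response w l :
  (forall mu1 mu2, stable uf uw mu1 -> stable uf uw mu2 -> mu1 = mu2) ->
  worker_util uw (DA LF (upd TW w l)) w <= worker_util uw (DA LF TW) w.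
Proof.
move=> stable_unique; rewrite {1}/worker_util.
case Ef': (DA LF (upd TW w l) w) => [f'|]; last exact: worker_util_ge0.
have [g Eg le_f'g] := DA_truncated_partner Ef'.
have -> := stable_unique _ _ DA_truthful_stable (DA_truncated_stable Ef').
by rewrite /worker_util Eg.
Qed.

Lemma DA_captured_truthful_ge w nu g : is_matching nu ->
  (index w (LF g) < firm_rank LF nu g)%N ->
  uw g w <= worker_util uw (DA LF (upd (captured nu) w (TW w))) w.
Proof.
move=> nu_match lt_rank; rewrite leNgt; apply/negP => lt_util.
set D := DA LF (upd (captured nu) w (TW w)) in lt_util.
have [_ _ D_nb] := DA_list_stable (upd (captured nu) w (TW w)) truthful_firm_uniq.
apply: (D_nb g w (mem_truthful_firm g w)); first by rewrite upd_at mem_truthful_worker.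
  apply: (firm_rank_DA_captured truthful_firm_uniq) => //.
  by apply: contraTneq lt_util; rewrite /D /worker_util => ->; rewrite ltxx.
move: lt_util; rewrite /worker_prefers /worker_util.
by case: (D w) => [h|] // lt_hg; rewrite upd_at index_truthful_worker.
Qed.

Lemma DA_captured_truthful_partner w t L a :
  DA LF (upd t w (TW w)) w = Some a ->
  uw a w <= worker_util uw (DA LF (upd (captured (DA LF (upd t w (TW w)))) w L)) w ->
  DA LF (upd (captured (DA LF (upd t w (TW w)))) w L) w = Some a.
Proof.
set muT := DA LF (upd t w (TW w)); set D := DA LF (upd (captured muT) w L) => Ea.
have [_ _ muT_nb] := DA_list_stable (upd t w (TW w)) truthful_firm_uniq.
rewrite /worker_util; case ED: (D w) => [h|]; last by rewrite leNgt uw_gt0.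
move=> le_ah; have [-> //|neq_ha] := eqVneq h a; exfalso.
have lt_ah : uw a w < uw h w.
  by rewrite lt_def le_ah andbT; apply: contra_neq neq_ha => /uw_inj.
apply: (muT_nb h w (mem_truthful_firm h w)); first by rewrite upd_at mem_truthful_worker.
  rewrite /firm_rank; case: pickP => [z /eqP Ez|_]; last by rewrite index_mem mem_truthful_firm.
  have [Ezw|neq_zw] := eqVneq z w.
    by move: Ez; rewrite Ezw Ea => -[Eah]; move: neq_ha; rewrite Eah eqxx.
  by apply: (DA_captured_firm_prefers truthful_firm_uniq ED) (mem_truthful_firm h z) neq_zw.
by rewrite /worker_prefers Ea upd_at index_truthful_worker.
Qed.

Section Undominated.
Variables (w : 'I_n) (l' : seq 'I_m).
Hypothesis l'_ge_truth : forall t : 'I_n -> seq 'I_m, (forall y, uniq (t y)) ->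
  worker_util uw (DA LF (upd t w (TW w))) w <= worker_util uw (DA LF (upd t w l')) w.

Lemma DA_deviation_list_stable_truthful t f' : DA LF (upd t w l') w = Some f' ->
  list_stable LF (upd t w (TW w)) (DA LF (upd t w l')).
Proof.
set mu' := DA LF (upd t w l') => Ef'.
have mu'_stable := DA_list_stable (upd t w l') truthful_firm_uniq.
have [mu'_match _ _] := mu'_stable.
apply: list_stable_upd mu'_stable _ _ => [g _|g _ _ lt_rank]; first exact: mem_truthful_worker.
rewrite /worker_prefers Ef' upd_at index_truthful_worker => lt_f'g.
have le_g := DA_captured_truthful_ge mu'_match lt_rank.
have := l'_ge_truth (captured_uniq mu'); rewrite {2}/worker_util.
rewrite (DA_captured_partner truthful_firm_uniq Ef') => le_f'.
by move: (le_trans le_g le_f'); rewrite leNgt lt_f'g.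
Qed.

Lemma DA_truthful_list_stable_deviation t :
  list_stable LF (upd t w l') (DA LF (upd t w (TW w))).
Proof.
set muT := DA LF (upd t w (TW w)).
have muT_stable := DA_list_stable (upd t w (TW w)) truthful_firm_uniq.
have [muT_match _ _] := muT_stable.
case Ea: (muT w) => [a|]; last first.
  by apply: list_stable_upd_unmatched muT_stable Ea _ => g; rewrite mem_truthful_worker.
set D := DA LF (upd (captured muT) w l').
have [_ D_ir D_nb] := DA_list_stable (upd (captured muT) w l') truthful_firm_uniq.
have ED : D w = Some a.
  have := l'_ge_truth (captured_uniq muT).
  rewrite {1}/worker_util (DA_captured_partner truthful_firm_uniq Ea).
  exact: DA_captured_truthful_partner Ea.
apply: list_stable_upd muT_stable _ _ => [g|g wg gl' lt_rank].
  by rewrite Ea => -[<-]; move: (D_ir _ _ ED).1; rewrite upd_at.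
rewrite /worker_prefers Ea upd_at => lt_ga.
apply: (D_nb g w wg); first by rewrite upd_at.
  apply: (firm_rank_DA_captured truthful_firm_uniq muT_match _ lt_rank).
  by rewrite ED; apply: contraTneq lt_ga => -[->]; rewrite ltnn.
by rewrite /worker_prefers ED upd_at.
Qed.

Lemma truthful_not_dominated t :
  ~ worker_util uw (DA LF (upd t w (TW w))) w < worker_util uw (DA LF (upd t w l')) w.
Proof.
rewrite {2}/worker_util; case Ef': (DA LF (upd t w l') w) => [f'|]; last first.
  by rewrite ltNge worker_util_ge0.
rewrite (DA_eq_of_cross_stable truthful_firm_uniq (DA_truthful_list_stable_deviation t)
  (DA_deviation_list_stable_truthful Ef')).
by rewrite /worker_util Ef' ltxx.
Qed.

End Undominated.

End TruthfulReports.

Theorem proposition0 (R : realFieldType) (m n : nat) (Theta : finType)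
  (Psi : Theta -> R) (uf : Theta -> 'I_m -> 'I_n -> R) (uw : 'I_m -> 'I_n -> R) :
  (forall th, 0 < Psi th) ->
  \sum_(th : Theta) Psi th = 1 ->
  (forall th f w, 0 < uf th f w) ->
  (forall f w, 0 < uw f w) ->
  (forall th f, injective (uf th f)) ->
  (forall w, injective (fun f => uw f w)) ->
  (forall th, exists! mu : matching m n, stable (uf th) uw mu) ->
  exists s : 'I_n -> seq 'I_m,
    [/\ (forall w, uniq (s w)),
        BNE Psi uf uw s,
        (forall w, ~ weakly_dominated uf uw w (s w)) &
        (forall th, stable (uf th) uw (DA (truthful_firm_lists (uf th)) s))].
Proof.
move=> Psi_gt0 _ uf_gt0 uw_gt0 uf_inj uw_inj unique_stable.
exists (truthful_worker_lists uw); split.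
- exact: truthful_worker_uniq.
- move=> w l _; apply: ler_sum => th _; apply: ler_wpM2l; first exact: ltW.
  apply: (truthful_best_response (uf_gt0 th) uw_gt0 (uf_inj th) uw_inj) => mu1 mu2 stable1 stable2.
  have [mu0 [_ only_mu0]] := unique_stable th.
  by rewrite -(only_mu0 _ stable1) -(only_mu0 _ stable2).
- move=> w [l' [_ ge_truth [th [t [t_uniq lt_truth]]]]].
  exact: (truthful_not_dominated uw_gt0 uw_inj (fun t t_uniq => ge_truth th t t_uniq) lt_truth).
- move=> th; exact: (DA_truthful_stable (uf_gt0 th) uw_gt0 (uf_inj th) uw_inj).
Qed.
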